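(* Let $n\ge1$ and on $\mathbb{D}^n$ (coordinates $\alpha_0,\dots,\alpha_{n-1}$) use the Poisson bracket described in the context. Let $\Phi_n$ be the monic orthogonal polynomial on the unit circle and $\Phi_n^*$ its reversed polynomial. Then for all $z,w$, \[ \{\Phi_n(z),\Phi_n^*(w)\}=i\,w\,\frac{\Phi_n(z)\Phi_n^*(w)-\Phi_n(w)\Phi_n^*(z)}{z-w}. \]
   Context: Let $\rho_j=(1-|\alpha_j|^2)^{1/2}$; the Poisson bracket is $\{f,g\}=\sum_{j=0}^{n-1}i\rho_j^2\bigl(\frac{\partial f}{\partial\bar\alpha_j}\frac{\partial g}{\partial\alpha_j}-\frac{\partial f}{\partial\alpha_j}\frac{\partial g}{\partial\bar\alpha_j}\bigr)$ (Wirtinger derivatives), i.e. $\{\alpha_j,\alpha_k\}=0$, $\{\alpha_j,\bar\alpha_k\}=-i\rho_j^2\delta_{jk}$; $z,w$ are held fixed. $\Phi_0=1$, $\Phi_{k+1}(z)=z\Phi_k(z)-\bar\alpha_k\Phi_k^*(z)$, $\Phi_k^*(z)=z^k\overline{\Phi_k(1/\bar z)}$. The identity is an identity of polynomials in $z,w$. *)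

From HB Require Import structures.
From mathcomp Require Import all_boot all_order all_algebra all_field.
From mathcomp Require Import mpoly.
Set Implicit Arguments. Unset Strict Implicit. Unset Printing Implicit Defensive.
Import Order.TTheory GRing.Theory Num.Theory.
Local Open Scope ring_scope.

(* Functions of (alpha_0..alpha_{n-1}) that are polynomials in alpha_j and
   conj(alpha_j): the variable 'X_(lshift n j) stands for alpha_j and
   'X_(rshift n j) for conj(alpha_j) (treated as independent variables, as
   in the Wirtinger calculus). *)
Definition Fn (n : nat) := {mpoly algC[n + n]}.

Definition alphaI (n : nat) (j : 'I_n) : Fn n := 'X_(lshift n j).
Definition alphabI (n : nat) (j : 'I_n) : Fn n := 'X_(rshift n j).

Definition alphab (n : nat) (k : nat) : Fn n :=
  match @insub nat (fun k => k < n)%N _ k with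
  | Some j => alphabI (j : 'I_n) | None => 0 end.

(* complex conjugation of a function: conj(f)(alpha) = conj(f(alpha)),
   i.e. conjugate the coefficients and swap alpha_j <-> conj(alpha_j) *)
Definition swapI (n : nat) (i : 'I_(n + n)) : 'I_(n + n) :=
  match split i with inl j => rshift n j | inr j => lshift n j end.
Definition conjF (n : nat) (p : Fn n) : Fn n :=
  mmap (fun c : algC => (c^*)%:MP) (fun i => 'X_(swapI i)) p.

Definition dA (n : nat) (j : 'I_n) (p : Fn n) : Fn n := p^`M(lshift n j).
Definition dAb (n : nat) (j : 'I_n) (p : Fn n) : Fn n := p^`M(rshift n j).

Definition rho2 (n : nat) (j : 'I_n) : Fn n := 1 - alphaI j * alphabI j.

Definition pbF (n : nat) (f g : Fn n) : Fn n :=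
  \sum_(j < n) ('i%:MP * rho2 j * (dAb j f * dA j g - dA j f * dAb j g)).

(* reversed polynomial of degree k:  z^k conj(p(1/conj z)) *)
Definition revstar (n k : nat) (p : {poly Fn n}) : {poly Fn n} :=
  \poly_(i < k.+1) conjF p`_(k - i).

(* monic orthogonal polynomials by the Szego recursion (variable z) *)
Fixpoint Phi (n k : nat) : {poly Fn n} :=
  match k with
  | 0 => 1
  | k'.+1 => 'X * Phi n k' - (alphab n k')%:P * revstar k' (Phi n k')
  end.
Definition Phistar (n k : nat) : {poly Fn n} := revstar k (Phi n k).

(* Polynomials in the two fixed variables z, w: {poly {poly Fn n}},
   inner variable z, outer variable w. *)
Definition Zv (n : nat) : {poly {poly Fn n}} := ('X)%:P.
Definition Wv (n : nat) : {poly {poly Fn n}} := 'X.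
Definition atZ (n : nat) (p : {poly Fn n}) : {poly {poly Fn n}} := p%:P.
Definition atW (n : nat) (p : {poly Fn n}) : {poly {poly Fn n}} :=
  map_poly polyC p.

Definition dA2 (n : nat) (j : 'I_n) (P : {poly {poly Fn n}}) :=
  map_poly (map_poly (dA j)) P.
Definition dAb2 (n : nat) (j : 'I_n) (P : {poly {poly Fn n}}) :=
  map_poly (map_poly (dAb j)) P.
Definition pb (n : nat) (P Q : {poly {poly Fn n}}) : {poly {poly Fn n}} :=
  \sum_(j < n) (('i%:MP * rho2 j)%:P%:P *
                 (dAb2 j P * dA2 j Q - dA2 j P * dAb2 j Q)).

From HB Require Import structures.
From mathcomp Require Import all_boot all_order all_algebra all_field.
From mathcomp Require Import mpoly.
From mathcomp Require Import ring zify.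
Import Order.TTheory GRing.Theory Num.Theory.
Set Implicit Arguments. Unset Strict Implicit. Unset Printing Implicit Defensive.
Local Open Scope ring_scope.

(* Write the Szego recursion as Phi_{k+1} = z Phi_k - conj(alpha_k) Phi*_k and
   Phi*_{k+1} = Phi*_k - alpha_k z Phi_k.  Phi_k and Phi*_k only depend on
   alpha_0, ..., alpha_{k-1}, and the bracket is a sum over the coordinates of
   biderivations, so in the brackets at step k+1 the coordinates j < k only see
   the transfer matrix acting on the brackets at step k, while coordinate k
   contributes the single new term {conj(alpha_k), alpha_k} = i rho_k^2.  By
   induction on k this gives, for any two points x, y independent of alpha,
     {Phi_k(x), Phi_k(y)} (x - y) = {Phi*_k(x), Phi*_k(y)} (x - y) = 0,
     {Phi_k(x), Phi*_k(y)} (x - y) = i y (Phi_k(x) Phi*_k(y) - Phi_k(y) Phi*_k(x)),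
   where multiplying by x - y replaces the division; take x = z and y = w. *)

Definition derivation (A : nzRingType) (D : {additive A -> A}) : Prop :=
  forall x y, D (x * y) = D x * y + x * D y.

Section Derivation.
Variable A : nzRingType.
Implicit Types D : {additive A -> A}.

Lemma derivation1 D : derivation D -> D 1 = 0.
Proof.
move=> DM; have := DM 1 1; rewrite !mulr1 mul1r => /esym/(canRL (addrK _)).
by rewrite subrr.
Qed.

Lemma derivation_map_poly D : derivation D -> derivation (map_poly D).
Proof.
move=> DM p q; apply/polyP => i.
rewrite coefD !coef_map !coefM raddf_sum -big_split /=; apply: eq_bigr => j _.
by rewrite DM !coef_map.
Qed.

Lemma map_poly_derivationX D : derivation D -> map_poly D 'X = 0.
Proof.
move=> DM; apply/polyP => i; rewrite coef_map coefX coef0.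
by case: (i == 1)%N; rewrite ?derivation1 ?raddf0.
Qed.

End Derivation.

Section PoissonBracket.
Variables (K : comNzRingType) (n : nat).
Variables (Da Db : 'I_n -> {additive K -> K}) (C : 'I_n -> K).
Hypotheses (DaM : forall j, derivation (Da j)) (DbM : forall j, derivation (Db j)).

Definition bracket (X Y : K) : K :=
  \sum_(j < n) C j * (Db j X * Da j Y - Da j X * Db j Y).

Definition free_of (j : 'I_n) (X : K) : Prop := Da j X = 0 /\ Db j X = 0.
Definition is_const (X : K) : Prop := forall j, free_of j X.
Definition local_to (k : 'I_n) (u : K) : Prop := forall j, j != k -> free_of j u.

Lemma free_of1 j : free_of j 1.
Proof. by split; apply: derivation1. Qed.

Lemma free_ofB j X Y : free_of j X -> free_of j Y -> free_of j (X - Y).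
Proof. by move=> [aX bX] [aY bY]; rewrite /free_of !raddfB aX bX aY bY subr0. Qed.

Lemma free_ofM j X Y : free_of j X -> free_of j Y -> free_of j (X * Y).
Proof. by move=> [aX bX] [aY bY]; rewrite /free_of DaM DbM aX bX aY bY mul0r mulr0 addr0. Qed.

Lemma is_const1 : is_const 1.
Proof. exact: free_of1. Qed.

Lemma bracketC X Y : bracket Y X = - bracket X Y.
Proof. by rewrite /bracket -sumrN; apply: eq_bigr => j _; ring. Qed.

Lemma bracketBl X1 X2 Y : bracket (X1 - X2) Y = bracket X1 Y - bracket X2 Y.
Proof. by rewrite /bracket -sumrB; apply: eq_bigr => j _; rewrite !raddfB /=; ring. Qed.

Lemma bracketBr X Y1 Y2 : bracket X (Y1 - Y2) = bracket X Y1 - bracket X Y2.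
Proof. by rewrite bracketC bracketBl [bracket Y1 X]bracketC [bracket Y2 X]bracketC; ring. Qed.

Lemma bracketMl X1 X2 Y : bracket (X1 * X2) Y = X1 * bracket X2 Y + X2 * bracket X1 Y.
Proof.
rewrite /bracket !mulr_sumr -big_split; apply: eq_bigr => j _ /=.
by rewrite DaM DbM; ring.
Qed.

Lemma bracketMr X Y1 Y2 : bracket X (Y1 * Y2) = Y1 * bracket X Y2 + Y2 * bracket X Y1.
Proof. by rewrite bracketC bracketMl [bracket Y2 X]bracketC [bracket Y1 X]bracketC; ring. Qed.

Lemma bracketxx X : bracket X X = 0.
Proof. by apply: big1 => j _; rewrite [Da j X * _]mulrC subrr mulr0. Qed.

Lemma bracket_free X Y : (forall j, free_of j X \/ free_of j Y) -> bracket X Y = 0.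
Proof.
move=> XY; apply: big1 => j _.
by case: (XY j) => [[-> ->]|[-> ->]]; rewrite ?mul0r ?mulr0 subrr mulr0.
Qed.

Lemma bracket_cstl s Y : is_const s -> bracket s Y = 0.
Proof. by move=> cs; apply: bracket_free => j; left. Qed.

Lemma bracket_cstr X s : is_const s -> bracket X s = 0.
Proof. by move=> cs; apply: bracket_free => j; right. Qed.

Lemma bracket_cstMl s X Y : is_const s -> bracket (s * X) Y = s * bracket X Y.
Proof. by move=> cs; rewrite bracketMl (bracket_cstl _ cs) mulr0 addr0. Qed.

Lemma bracket_cstMr X s Y : is_const s -> bracket X (s * Y) = s * bracket X Y.
Proof. by move=> cs; rewrite bracketMr (bracket_cstr _ cs) mulr0 addr0. Qed.

Lemma bracket_local k u X : local_to k u -> free_of k X -> bracket u X = 0.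
Proof.
move=> lu fX; apply: bracket_free => j.
by case: (eqVneq j k) => [->|/lu]; [right | left].
Qed.

Lemma bracket_mulmul u v X Y : bracket u Y = 0 -> bracket X v = 0 ->
  bracket (u * X) (v * Y) = u * v * bracket X Y + X * Y * bracket u v.
Proof. by move=> uY Xv; rewrite !bracketMl !bracketMr uY Xv; ring. Qed.

Lemma bracket_step k u1 u2 v1 v2 X1 X2 Y1 Y2 :
  [/\ local_to k u1, local_to k u2, local_to k v1 & local_to k v2] ->
  [/\ free_of k X1, free_of k X2, free_of k Y1 & free_of k Y2] ->
  bracket (u1 * X1 - u2 * X2) (v1 * Y1 - v2 * Y2) =
    u1 * v1 * bracket X1 Y1 - u1 * v2 * bracket X1 Y2
    - u2 * v1 * bracket X2 Y1 + u2 * v2 * bracket X2 Y2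
    + (X1 * Y1 * bracket u1 v1 - X1 * Y2 * bracket u1 v2
       - X2 * Y1 * bracket u2 v1 + X2 * Y2 * bracket u2 v2).
Proof.
move=> [lu1 lu2 lv1 lv2] [fX1 fX2 fY1 fY2].
have sep u X : local_to k u -> free_of k X -> bracket X u = 0.
  by move=> lu fX; rewrite bracketC (bracket_local lu fX) oppr0.
rewrite !bracketBl !bracketBr !bracket_mulmul; first ring.
all: by [apply: (bracket_local (k := k)) | apply: sep].
Qed.

(* The brackets at step k are only known after multiplication by x - y. *)
Lemma bracket_step_mulr k d u1 u2 v1 v2 X1 X2 Y1 Y2 R11 R12 R21 R22 :
  [/\ local_to k u1, local_to k u2, local_to k v1 & local_to k v2] ->
  [/\ free_of k X1, free_of k X2, free_of k Y1 & free_of k Y2] ->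
  bracket X1 Y1 * d = R11 -> bracket X1 Y2 * d = R12 ->
  bracket X2 Y1 * d = R21 -> bracket X2 Y2 * d = R22 ->
  bracket (u1 * X1 - u2 * X2) (v1 * Y1 - v2 * Y2) * d =
    u1 * v1 * R11 - u1 * v2 * R12 - u2 * v1 * R21 + u2 * v2 * R22
    + (X1 * Y1 * bracket u1 v1 - X1 * Y2 * bracket u1 v2
       - X2 * Y1 * bracket u2 v1 + X2 * Y2 * bracket u2 v2) * d.
Proof. by move=> lu fX <- <- <- <-; rewrite (bracket_step lu fX); ring. Qed.

Section Szego.
Variables (c : K) (a b : nat -> K).
Hypotheses (Da_a : forall k j, Da j (a k) = (k == j)%:R) (Db_a : forall k j, Db j (a k) = 0).
Hypotheses (Da_b : forall k j, Da j (b k) = 0) (Db_b : forall k j, Db j (b k) = (k == j)%:R).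
Hypothesis C_rho : forall j, C j = c * (1 - a j * b j).

Fixpoint szego (x : K) (k : nat) : K * K :=
  if k is k'.+1 then
    let: (p, q) := szego x k' in (x * p - b k' * q, q - x * a k' * p)
  else (1, 1).

Definition phi x k := (szego x k).1.
Definition phistar x k := (szego x k).2.

Lemma phiS x k : phi x k.+1 = x * phi x k - b k * phistar x k.
Proof. by rewrite /phi /phistar /=; case: szego. Qed.

Lemma phistarS x k : phistar x k.+1 = phistar x k - x * a k * phi x k.
Proof. by rewrite /phi /phistar /=; case: szego. Qed.

Lemma free_of_a (j : 'I_n) k : k != j :> nat -> free_of j (a k).
Proof. by move=> /negbTE kj; rewrite /free_of Da_a Db_a kj. Qed.

Lemma free_of_b (j : 'I_n) k : k != j :> nat -> free_of j (b k).
Proof. by move=> /negbTE kj; rewrite /free_of Da_b Db_b kj. Qed.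

Lemma szego_free x k (j : 'I_n) : is_const x -> (k <= j)%N ->
  free_of j (phi x k) /\ free_of j (phistar x k).
Proof.
move=> cx; elim: k => [|k IH] kj; first by split; apply: free_of1.
have [fP fQ] := IH (ltnW kj); have kj' : k != j :> nat by rewrite ltn_eqF.
rewrite phiS phistarS; split.
  exact: free_ofB (free_ofM (cx j) fP) (free_ofM (free_of_b kj') fQ).
exact: free_ofB fQ (free_ofM (free_ofM (cx j) (free_of_a kj')) fP).
Qed.

Lemma bracket_b_a k (kn : (k < n)%N) : bracket (b k) (a k) = C (Ordinal kn).
Proof.
rewrite /bracket (bigD1 (Ordinal kn)) //= big1 => [|j jk].
  by rewrite Da_a Db_a Da_b Db_b eqxx mulr0 subr0 /= mulr1n !mulr1 addr0.
have /negbTE kj : k != j :> nat by rewrite eq_sym.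
by rewrite Da_a Db_a Da_b Db_b kj mulr0 subr0 mulr0.
Qed.

Lemma szego_bracket k : (k <= n)%N -> forall x y, is_const x -> is_const y ->
  [/\ bracket (phi x k) (phi y k) * (x - y) = 0,
      bracket (phistar x k) (phistar y k) * (x - y) = 0 &
      bracket (phi x k) (phistar y k) * (x - y) =
        c * y * (phi x k * phistar y k - phi y k * phistar x k)].
Proof.
elim: k => [_ x y _ _|k IH kn x y cx cy].
  by rewrite /phi /phistar /= (bracket_cstl _ is_const1) mul0r subrr mulr0.
have [PP QQ PQ] := IH (ltnW kn) x y cx cy.
have [_ _ PQ'] := IH (ltnW kn) y x cy cx.
have QP : bracket (phistar x k) (phi y k) * (x - y) =
    c * x * (phi y k * phistar x k - phi x k * phistar y k).
  by rewrite bracketC mulNr -mulrN opprB.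
pose o := Ordinal kn.
have [fPx fQx] := szego_free (k := k) (j := o) cx (leqnn k).
have [fPy fQy] := szego_free (k := k) (j := o) cy (leqnn k).
have lc s : is_const s -> local_to o s by move=> cs j _; apply: cs.
have la s : is_const s -> local_to o (s * a k).
  by move=> cs j jo; apply: free_ofM; [apply: cs | apply: free_of_a; rewrite eq_sym].
have lb : local_to o (b k) by move=> j jo; apply: free_of_b; rewrite eq_sym.
rewrite !phiS !phistarS; split.
- rewrite (bracket_step_mulr (And4 (lc _ cx) lb (lc _ cy) lb)
    (And4 fPx fQx fPy fQy) PP PQ QP QQ).
  rewrite !(bracket_cstl _ cx) (bracket_cstr _ cy) bracketxx; ring.
- rewrite -[phistar x k]mul1r -[phistar y k]mul1r.
  rewrite (bracket_step_mulr (And4 (lc _ is_const1) (la _ cx) (lc _ is_const1) (la _ cy))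
    (And4 fQx fPx fQy fPy) QQ QP PQ PP).
  rewrite !(bracket_cstl _ is_const1) (bracket_cstr _ is_const1).
  rewrite (bracket_cstMl _ _ cx) (bracket_cstMr _ _ cy) bracketxx; ring.
- rewrite -[phistar y k]mul1r.
  rewrite (bracket_step_mulr (And4 (lc _ cx) lb (lc _ is_const1) (la _ cy))
    (And4 fPx fQx fQy fPy) PQ PP QQ QP).
  rewrite !(bracket_cstl _ cx) (bracket_cstr _ is_const1) (bracket_cstMr _ _ cy).
  rewrite (bracket_b_a kn) C_rho /=; ring.
Qed.

End Szego.

End PoissonBracket.

Definition conj_mpolyC (n : nat) : {rmorphism algC -> Fn n} :=
  (@mpolyC (n + n) algC \o Num.conj)%FUN.

HB.instance Definition _ (n : nat) :=
  GRing.RMorphism.copy (@conjF n) (mmap (conj_mpolyC n) (fun i => 'X_(swapI i))).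

Section Conjugation.
Variable n : nat.

Lemma swapIK : involutive (@swapI n).
Proof.
move=> i; rewrite -[i]splitK /swapI; case: (split i) => j /=.
  by rewrite (unsplitK (inl j)) (unsplitK (inr j)).
by rewrite (unsplitK (inr j)) (unsplitK (inl j)).
Qed.

Lemma conjFE (p : Fn n) : conjF p = mmap (conj_mpolyC n) (fun i => 'X_(swapI i)) p.
Proof. by []. Qed.

Lemma conjFC (c : algC) : conjF (n := n) c%:MP = c^*%:MP.
Proof. by rewrite conjFE mmapC. Qed.

Lemma conjFXm (m : 'X_{1..n + n}) : conjF (n := n) 'X_[m] = \prod_i 'X_(swapI i) ^+ m i.
Proof. by rewrite conjFE mmapX. Qed.

Lemma conjFK : involutive (@conjF n).
Proof.
elim/mpolyind=> [|c m p _ _ IH]; first by rewrite !rmorph0.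
rewrite !rmorphD /= IH -mul_mpolyC !rmorphM /= !conjFC conjCK conjFXm rmorph_prod /=.
rewrite [in RHS]mpolyXE_id; congr (_ * _ + _); apply: eq_bigr => i _.
by rewrite rmorphXn /= conjFE mmapX mmap1U swapIK.
Qed.

Lemma alphab_ord (j : 'I_n) : alphab n j = alphabI j.
Proof. by rewrite /alphab valK. Qed.

Lemma conjF_alphabI (j : 'I_n) : conjF (alphabI j) = alphaI j.
Proof.
by rewrite conjFE /alphabI mmapX mmap1U /swapI (unsplitK (inr j)).
Qed.

Lemma mderivXi (i i' : 'I_(n + n)) : ('X_i : Fn n)^`M(i') = (i == i')%:R.
Proof.
rewrite mderivX mnm1E; case: eqP => [<-|_]; last by rewrite scale0r.
by rewrite -[X in (X - _)%MM]add0m addmK mpolyX0 scale1r.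
Qed.

Lemma eq_ord_out k (j : 'I_n) : ~~ (k < n)%N -> (k == j) = false.
Proof. by apply: contraNF => /eqP ->. Qed.

Lemma mderiv_alphab_l (j : 'I_n) k : (alphab n k)^`M(lshift n j) = 0.
Proof.
rewrite /alphab; case: insubP => [j' _ _|_]; last exact: mderiv0.
by rewrite mderivXi eq_rlshift.
Qed.

Lemma mderiv_alphab_r (j : 'I_n) k : (alphab n k)^`M(rshift n j) = (k == j)%:R.
Proof.
rewrite /alphab; case: insubP => [j' _ <-|kn]; last by rewrite mderiv0 eq_ord_out.
by rewrite mderivXi eq_rshift.
Qed.

Lemma mderiv_alpha_l (j : 'I_n) k : (conjF (alphab n k))^`M(lshift n j) = (k == j)%:R.
Proof.
rewrite /alphab; case: insubP => [j' _ <-|kn]; last by rewrite rmorph0 mderiv0 eq_ord_out.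
by rewrite conjF_alphabI mderivXi eq_lshift.
Qed.

Lemma mderiv_alpha_r (j : 'I_n) k : (conjF (alphab n k))^`M(rshift n j) = 0.
Proof.
rewrite /alphab; case: insubP => [j' _ _|_]; last by rewrite rmorph0 mderiv0.
by rewrite conjF_alphabI mderivXi eq_lrshift.
Qed.

End Conjugation.

Section SzegoPolynomials.
Variable n : nat.
Implicit Types (p : {poly Fn n}) (c : Fn n).

Lemma revstarS k p c : (size p <= k.+1)%N ->
  revstar k.+1 ('X * p - c%:P * revstar k p) = revstar k p - (conjF c)%:P * 'X * p.
Proof.
move=> sp; apply/polyP => i.
rewrite coefB -mulrA coefCM coefXM !coef_poly coefB coefXM coefCM coef_poly.
case: i => [|i] /=; first by rewrite !subn0 ltnn !mulr0 !subr0.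
rewrite subSS; case: (ltngtP i k) => [ik|ki|->].
- have -> : (i.+1 < k.+2)%N by lia.
  have -> : (i.+1 < k.+1)%N by lia.
  have -> : (k - i == 0)%N = false by apply/eqP; lia.
  have -> : (k - i < k.+1)%N by lia.
  have -> : (k - (k - i) = i)%N by lia.
  have -> : ((k - i).-1 = k - i.+1)%N by lia.
  by rewrite rmorphB rmorphM /= conjFK.
- have -> : (i.+1 < k.+2)%N = false by apply/negbTE; lia.
  have -> : (i.+1 < k.+1)%N = false by apply/negbTE; lia.
  by rewrite nth_default ?mulr0 ?subr0 // (leq_trans sp).
- by rewrite subnn ltnSn ltnn eqxx rmorphB rmorphM /= conjFK rmorph0 subn0.
Qed.

Lemma size_Phi k : (size (Phi n k) <= k.+1)%N.
Proof.
elim: k => [|k IH] /=; first by rewrite size_poly1.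
rewrite (leq_trans (size_polyD _ _)) // size_polyN geq_max mul_polyC.
rewrite (leq_trans (size_polyMleq _ _)) ?size_polyX //=.
by rewrite (leq_trans (size_scale_leq _ _)) // (leq_trans (size_poly _ _)).
Qed.

Lemma PhiS k : Phi n k.+1 = 'X * Phi n k - (alphab n k)%:P * Phistar n k.
Proof. by []. Qed.

Lemma PhistarS k :
  Phistar n k.+1 = Phistar n k - (conjF (alphab n k))%:P * 'X * Phi n k.
Proof. by rewrite /Phistar PhiS revstarS // size_Phi. Qed.

Lemma Phistar0 : Phistar n 0 = 1.
Proof. by apply/polyP => -[|i]; rewrite coef_poly coef1 //= rmorph1. Qed.

End SzegoPolynomials.

Section SzegoPoissonAlgebra.
Variable n : nat.
Local Notation R2 := {poly {poly Fn n}}.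

Definition lift_mderiv (i : 'I_(n + n)) : {additive R2 -> R2} :=
  map_poly (map_poly (mderiv i)).

Lemma derivation_lift_mderiv i : derivation (lift_mderiv i).
Proof. by do 2 apply: derivation_map_poly; apply: mderivM. Qed.

Lemma lift_mderivC i (p : Fn n) : lift_mderiv i p%:P%:P = (p^`M(i))%:P%:P.
Proof. by rewrite /lift_mderiv /= map_polyC /= map_polyC. Qed.

Definition dalpha (j : 'I_n) := lift_mderiv (lshift n j).
Definition dalphab (j : 'I_n) := lift_mderiv (rshift n j).
Definition rho2C (j : 'I_n) : R2 := ('i%:MP * rho2 j)%:P%:P.
Definition alphaC (k : nat) : R2 := (conjF (alphab n k))%:P%:P.
Definition alphabC (k : nat) : R2 := (alphab n k)%:P%:P.

Lemma pb_bracket (P Q : R2) : pb P Q = bracket dalpha dalphab rho2C P Q.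
Proof. by []. Qed.

Lemma is_const_Zv : is_const dalpha dalphab (Zv n).
Proof.
have Z0 i : lift_mderiv i (Zv n) = 0.
  by rewrite /lift_mderiv /Zv /= map_polyC /= map_poly_derivationX //; apply: mderivM.
by split; apply: Z0.
Qed.

Lemma is_const_Wv : is_const dalpha dalphab (Wv n).
Proof.
have W0 i : lift_mderiv i (Wv n) = 0.
  by apply: map_poly_derivationX; apply: derivation_map_poly; apply: mderivM.
by split; apply: W0.
Qed.

Lemma rho2C_alpha (j : 'I_n) : rho2C j = ('i%:MP)%:P%:P * (1 - alphaC j * alphabC j).
Proof.
rewrite /rho2C /alphaC /alphabC alphab_ord conjF_alphabI /rho2.
by rewrite !rmorphM !rmorphB !rmorph1 /= !rmorphM.
Qed.

Lemma dalpha_alphaC k j : dalpha j (alphaC k) = (k == j)%:R.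
Proof. by rewrite /dalpha lift_mderivC mderiv_alpha_l !polyC_natr. Qed.

Lemma dalphab_alphaC k j : dalphab j (alphaC k) = 0.
Proof. by rewrite /dalphab lift_mderivC mderiv_alpha_r !polyC0. Qed.

Lemma dalpha_alphabC k j : dalpha j (alphabC k) = 0.
Proof. by rewrite /dalpha lift_mderivC mderiv_alphab_l !polyC0. Qed.

Lemma dalphab_alphabC k j : dalphab j (alphabC k) = (k == j)%:R.
Proof. by rewrite /dalphab lift_mderivC mderiv_alphab_r !polyC_natr. Qed.

Lemma Phi_szego (f : {rmorphism {poly Fn n} -> R2}) x :
    (forall c, f c%:P = c%:P%:P) -> f 'X = x -> forall k,
  f (Phi n k) = phi alphaC alphabC x k /\
  f (Phistar n k) = phistar alphaC alphabC x k.
Proof.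
move=> fC <-; elim=> [|k [IHp IHq]]; first by rewrite Phistar0 rmorph1.
rewrite phiS phistarS PhiS PhistarS !rmorphB !rmorphM !fC IHp IHq.
by split; [|congr (_ - _ * _); rewrite mulrC].
Qed.

End SzegoPoissonAlgebra.

Theorem theorem13p5 (n : nat) (hn : (1 <= n)%N) :
  pb (atZ (Phi n n)) (atW (Phistar n n)) * (Zv n - Wv n) =
  ('i%:MP)%:P%:P * Wv n *
    (atZ (Phi n n) * atW (Phistar n n) - atW (Phi n n) * atZ (Phistar n n)).
Proof.
have [PZ QZ] := @Phi_szego n polyC (Zv n) (fun=> erefl) erefl n.
have [PW QW] := @Phi_szego n (map_poly polyC) (Wv n) (fun=> map_polyC _ _) (map_polyX _) n.
have [_ _] := @szego_bracket _ n (@dalpha n) (@dalphab n) (@rho2C n)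
  (fun j => derivation_lift_mderiv _) (fun j => derivation_lift_mderiv _)
  _ _ _ (@dalpha_alphaC n) (@dalphab_alphaC n) (@dalpha_alphabC n) (@dalphab_alphabC n)
  (@rho2C_alpha n) _ (leqnn n) _ _ (@is_const_Zv n) (@is_const_Wv n).
by rewrite pb_bracket /atZ /atW PZ QZ PW QW.
Qed.
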